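(* Let $m, r$ be positive integers with $r$ even and $m \geq 4$. Then the complete graph $K_4$ is (isomorphic to) a subgraph of $G(\mathbb{Z}^m, \sqrt{r})$.
   Context: For $X \subseteq \mathbb{R}^m$ and $d>0$, $G(X,d)$ denotes the Euclidean distance graph with vertex set $X$ in which two vertices are adjacent if and only if their Euclidean distance is exactly $d$. *)

From mathcomp Require Import all_boot all_order all_algebra.
From mathcomp Require Import reals.
Set Implicit Arguments. Unset Strict Implicit. Unset Printing Implicit Defensive.
Import Order.TTheory GRing.Theory Num.Theory.
Local Open Scope ring_scope.

Definition euclid_dist (R : realType) (m : nat) (x y : 'rV[R]_m) : R :=
  Num.sqrt (\sum_(i < m) (x ord0 i - y ord0 i) ^+ 2).

Definition Zlattice (R : realType) (m : nat) (x : 'rV[R]_m) : Prop :=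
  forall i : 'I_m, exists z : int, x ord0 i = z%:~R.

Definition edg_vertex (R : realType) (m : nat) (X : 'rV[R]_m -> Prop)
  (x : 'rV[R]_m) : Prop := X x.
Definition edg_adj (R : realType) (m : nat) (X : 'rV[R]_m -> Prop) (d : R)
  (x y : 'rV[R]_m) : Prop := X x /\ X y /\ euclid_dist x y = d.

Definition contains_Kn (R : realType) (m : nat) (X : 'rV[R]_m -> Prop) (d : R)
  (n : nat) : Prop :=
  exists f : 'I_n -> 'rV[R]_m,
    injective f /\ (forall i, edg_vertex X (f i)) /\
    (forall i j, i != j -> edg_adj X d (f i) (f j)).

(* Lagrange's four-square theorem gives r/2 = |q|^2 for some q in Z^4. Read as
   quaternions, x |-> x * conj q multiplies Euclidean lengths by |q|, so it maps
   the regular tetrahedron 0, 1+i, 1+j, i+j of side sqrt 2 onto a regular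
   tetrahedron of Z^4 with side sqrt (2 |q|^2) = sqrt r; padding with zeros puts
   it in Z^m. Multiplicativity of
   the quaternion norm makes sums of four squares closed under products, so it
   suffices to treat primes. For an odd prime p, pigeonholing the squares modulo
   p gives a multiple m p = x^2 + y^2 + 1 with 0 < m < p, and a multiple m p of
   p that is a sum of four squares with 1 < m can be replaced by a smaller one:
   reduce the four roots modulo m into [-m/2, m/2) and divide the quaternion
   product of the two vectors by m. *)

From mathcomp Require Import all_boot all_order all_algebra.
From mathcomp Require Import reals.
From mathcomp Require Import ring lra zify.
Set Implicit Arguments. Unset Strict Implicit. Unset Printing Implicit Defensive.
Import Order.TTheory GRing.Theory Num.Theory.
Local Open Scope ring_scope.

Section SquaredNorm.
Variable R : comPzRingType.

Definition sqnorm n (x : 'rV[R]_n) : R := \sum_i x 0 i ^+ 2.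

Lemma sqnorm0 n : sqnorm (0 : 'rV[R]_n) = 0.
Proof. by rewrite /sqnorm big1 // => i _; rewrite mxE expr0n. Qed.

Lemma sqnorm_mxE n (x : 'rV[R]_n) : sqnorm x = (x *m x^T) 0 0.
Proof. by rewrite !mxE; apply: eq_bigr => i _; rewrite mxE expr2. Qed.

Lemma sqnormZ n a (x : 'rV[R]_n) : sqnorm (a *: x) = a ^+ 2 * sqnorm x.
Proof. by rewrite /sqnorm mulr_sumr; apply: eq_bigr => i _; rewrite mxE exprMn. Qed.

Lemma sqnorm_mulmx n s (M : 'M[R]_n) (x : 'rV[R]_n) :
  M *m M^T = s%:M -> sqnorm (x *m M) = s * sqnorm x.
Proof.
move=> MMt; rewrite !sqnorm_mxE trmx_mul mulmxA -(mulmxA x) MMt.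
by rewrite mul_mx_scalar -scalemxAl mxE.
Qed.

Definition vec4 (a b c d : R) : 'rV[R]_4 := \row_i [:: a; b; c; d]`_i.

Lemma vec4P (x : 'rV[R]_4) : exists a b c d, x = vec4 a b c d.
Proof.
exists (x 0 0), (x 0 1), (x 0 2), (x 0 3).
by apply/rowP => -[[|[|[|[|//]]]] ?]; rewrite !mxE /=; congr (x _ _); apply: val_inj.
Qed.

Lemma vec4B (a b c d a' b' c' d' : R) :
  vec4 a b c d - vec4 a' b' c' d' = vec4 (a - a') (b - b') (c - c') (d - d').
Proof. by apply/rowP => -[[|[|[|[|//]]]] ?]; rewrite !mxE. Qed.

Lemma sqnorm_vec4 a b c d : sqnorm (vec4 a b c d) = a ^+ 2 + b ^+ 2 + c ^+ 2 + d ^+ 2.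
Proof. by rewrite /sqnorm !big_ord_recl big_ord0 !mxE /= addr0 !addrA. Qed.

(* [x *m quat_mx q] is the quaternion product [x * conj q], with the
   coordinates of a row vector read along 1, i, j, k. *)
Definition quat_mx (q : 'rV[R]_4) : 'M[R]_4 :=
  let: (a, b, c, d) := (q 0 0, q 0 1, q 0 2, q 0 3) in
  \matrix_(i < 4, j < 4) nth 0 (nth [::]
    [:: [:: a; -b; -c; -d]; [:: b; a; d; -c]; [:: c; -d; a; b]; [:: d; c; -b; a]] i) j.

Lemma quat_mx_mul_tr q : quat_mx q *m (quat_mx q)^T = (sqnorm q)%:M.
Proof.
have [a [b [c [d ->]]]] := vec4P q.
apply/matrixP => i j; rewrite !mxE sqnorm_vec4 !big_ord_recl big_ord0 !mxE /=.
by case: i j => [[|[|[|[|//]]]] ?] [[|[|[|[|//]]]] ?] /=; rewrite ?mulr1n ?mulr0n; ring.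
Qed.

Lemma mul_quat_mx q : q *m quat_mx q = sqnorm q *: delta_mx 0 0.
Proof.
have [a [b [c [d ->]]]] := vec4P q.
apply/rowP => j; rewrite !mxE sqnorm_vec4 !big_ord_recl big_ord0 !mxE /=.
by case: j => [[|[|[|[|//]]]] ?] /=; rewrite ?mulr1 ?mulr0; ring.
Qed.

Lemma sqnorm_mul_quat_mx q x : sqnorm (x *m quat_mx q) = sqnorm q * sqnorm x.
Proof. exact/sqnorm_mulmx/quat_mx_mul_tr. Qed.

End SquaredNorm.

(* Since [y * conj y = sqnorm y] is divisible by [m], so is
   [(y + m t) * conj y = m (r + t * conj y)]. *)
Lemma sqnorm_descent (R : idomainType) (m r n : R) (y t : 'rV[R]_4) : m != 0 ->
  sqnorm y = m * r -> sqnorm (y + m *: t) = m * n ->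
  sqnorm (r *: delta_mx 0 0 + t *m quat_mx y) = r * n.
Proof.
move=> m_nz Ey Eyt; apply: (mulfI (expf_neq0 2 m_nz)).
rewrite -sqnormZ scalerDr scalerA -Ey -mul_quat_mx scalemxAl -mulmxDl.
by rewrite sqnorm_mul_quat_mx Ey Eyt mulrACA -expr2.
Qed.

Lemma sqnorm_ge0 (R : realDomainType) n (x : 'rV[R]_n) : 0 <= sqnorm x.
Proof. by apply: sumr_ge0 => i _; apply: sqr_ge0. Qed.

Lemma sqnorm_eq0 (R : realDomainType) n (x : 'rV[R]_n) : sqnorm x = 0 -> x = 0.
Proof.
move=> /psumr_eq0P x0; apply/rowP => i; rewrite mxE.
by apply/eqP; rewrite -sqrf_eq0; apply/eqP/x0 => // j _; apply: sqr_ge0.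
Qed.

Section CenteredVectors.
Variables (R : realDomainType) (m : R) (n : nat) (z : 'rV[R]_n).
Hypothesis z_centered : forall i, - m <= z 0 i < m.

Lemma sqr_centered i : z 0 i ^+ 2 <= m ^+ 2.
Proof. by have /andP[? ?] := z_centered i; nra. Qed.

Lemma sqnorm_centered_le : sqnorm z <= m ^+ 2 *+ n.
Proof.
rewrite -{2}[n]card_ord -sumr_const.
by apply: ler_sum => i _; apply: sqr_centered.
Qed.

Lemma sqnorm_centered_eq : sqnorm z = m ^+ 2 *+ n -> forall i, z 0 i = - m.
Proof.
rewrite -{2}[n]card_ord -sumr_const => /eqP; rewrite eq_sym -subr_eq0 -sumrB => /eqP.
move=> /psumr_eq0P eq_sqr i; have /andP[? ?] := z_centered i.
have /eqP : m ^+ 2 - z 0 i ^+ 2 = 0 by apply: eq_sqr => // j _; rewrite subr_ge0 sqr_centered.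
by rewrite subr_eq0 eqf_sqr => /orP[/eqP|/eqP]; lra.
Qed.

End CenteredVectors.

Lemma centered_divz (x m : int) : 0 < m ->
  - m <= 2 * (x - m * divz (2 * x + m) (2 * m)) < m.
Proof.
move=> m_gt0; have m2_nz : 2 * m != 0 by lia.
have := divz_eq (2 * x + m) (2 * m).
have := modz_ge0 (2 * x + m) m2_nz; have := ltz_pmod (2 * x + m) (_ : 0 < 2 * m).
lia.
Qed.

Lemma sqnorm_centered_range (m r : int) (y : 'rV[int]_4) :
  (forall i, - m <= (2 *: y) 0 i < m) -> 0 < m -> sqnorm y = m * r -> 0 <= r <= m.
Proof.
move=> y_centered m_gt0 Ey; apply/andP; split.
  by rewrite -(pmulr_rge0 _ m_gt0) -Ey sqnorm_ge0.
by have := sqnorm_centered_le y_centered; rewrite sqnormZ Ey; nia.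
Qed.

Lemma prime_neq_mulz (p m : nat) (k : int) : prime p -> (1 < m < p)%N -> p%:Z <> m%:Z * k.
Proof.
move=> p_prime m_bounds Ep; have m_neq1 : m != 1%N by lia.
have /(prime_nt_dvdP p_prime m_neq1) : (m %| p)%N.
  by apply/(@dvdzP m p); exists k; rewrite Ep mulrC.
lia.
Qed.

Definition sum4sq (n : int) : Prop := exists x : 'rV[int]_4, n = sqnorm x.

Lemma sum4sqM m n : sum4sq m -> sum4sq n -> sum4sq (m * n).
Proof. by move=> [x ->] [y ->]; exists (y *m quat_mx x); rewrite sqnorm_mul_quat_mx. Qed.

Lemma sum4sq_descent_step (p m : nat) : prime p -> (1 < m < p)%N ->
  sum4sq (m * p)%N -> exists2 r : nat, (0 < r < m)%N & sum4sq (r * p)%N.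
Proof.
move=> p_prime m_bounds [x Ex].
set M : int := m; have M_gt0 : 0 < M by rewrite ltz_nat; lia.
pose t := \row_i divz (2 * x 0 i + M) (2 * M).
pose y := x - M *: t.
have y_centered i : - M <= (2 *: y) 0 i < M by rewrite !mxE; apply: centered_divz.
pose s := \sum_i (2 * y 0 i * t 0 i + M * t 0 i ^+ 2).
have Ex' : sqnorm (y + M *: t) = M * p by rewrite /y subrK -Ex PoszM.
set r := p%:Z - s.
have Ey : sqnorm y = M * r.
  apply/(addIr (M * s)); rewrite -mulrDr subrK -Ex' /sqnorm mulr_sumr -big_split.
  by apply: eq_bigr => i _; rewrite /= !mxE; ring.
have /andP[r_ge0 r_le_M] := sqnorm_centered_range y_centered M_gt0 Ey.
have M_ndvd_p k : p%:Z <> M * k by apply: prime_neq_mulz.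
have r_neq0 : r != 0.
  apply/eqP => r0; move: Ey; rewrite r0 mulr0 => /sqnorm_eq0 y0.
  apply: (M_ndvd_p (\sum_i t 0 i ^+ 2)); rewrite -[p%:Z](subrK s) -/r r0 add0r mulr_sumr.
  by apply: eq_bigr => i _; rewrite y0 mxE; ring.
have r_neqM : r != M.
  apply/eqP => rM; have y_half i : 2 * y 0 i = - M.
    have := sqnorm_centered_eq y_centered; rewrite sqnormZ Ey rM => /(_ _ i).
    by rewrite mxE; apply; ring.
  apply: (M_ndvd_p (1 + \sum_i (t 0 i ^+ 2 - t 0 i))).
  rewrite -[p%:Z](subrK s) -/r rM mulrDr mulr1 mulr_sumr; congr (_ + _).
  by apply: eq_bigr => i _; rewrite y_half; ring.
exists `|r|%N; first by lia.
have := sqnorm_descent (lt0r_neq0 M_gt0) Ey Ex'.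
by rewrite PoszM gez0_abs // => <-; eexists.
Qed.

Lemma sum4sq_mul_prime p m : prime p -> (0 < m < p)%N -> sum4sq (m * p)%N -> sum4sq p.
Proof.
move=> p_prime; elim/ltn_ind: m => m IH /andP[m_gt0 m_lt_p] mp_sum4sq.
have [m_gt1|m_le1] := ltnP 1 m; last first.
  have m1 : m = 1%N by lia.
  by rewrite m1 mul1n in mp_sum4sq.
have m_bounds : (1 < m < p)%N by lia.
have [r /andP[r_gt0 r_lt_m] rp_sum4sq] := sum4sq_descent_step p_prime m_bounds mp_sum4sq.
by apply: (IH r) => //; lia.
Qed.

Section SumOfTwoSquaresPlusOne.
Local Open Scope nat_scope.

Lemma sqr_modn_inj p x y : prime p -> 2 * x < p -> 2 * y < p ->
  x ^ 2 = y ^ 2 %[mod p] -> x = y.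
Proof.
move=> p_prime x_lt y_lt; wlog le_yx : x y x_lt y_lt / y <= x.
  by move=> W Exy; case: (leqP y x) => [|/ltnW] le; [|symmetry]; apply: W.
move/eqP; rewrite eqn_mod_dvd ?leq_exp2r // subn_sqr Euclid_dvdM //.
have p_gt0 := prime_gt0 p_prime.
by case/orP => /dvdn_leq; lia.
Qed.

(* The (p + 1)/2 residues of x^2 and the (p + 1)/2 residues of -1 - y^2,
   for 0 <= x, y <= (p - 1)/2, cannot all be distinct modulo p. *)
Lemma prime_dvd_sqr_add_sqr_add1 p : prime p -> odd p ->
  exists x y, [/\ 2 * x < p, 2 * y < p & p %| x ^ 2 + y ^ 2 + 1].
Proof.
move=> p_prime p_odd; have p_gt0 := prime_gt0 p_prime.
have p_half : p = (p./2 * 2).+1 by rewrite muln2 -[LHS]odd_double_half p_odd.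
pose xs := iota 0 (p./2).+1.
have xs_small x : x \in xs -> 2 * x < p by rewrite mem_iota; lia.
pose s1 := [seq x ^ 2 %% p | x <- xs].
pose s2 := [seq p.-1 - y ^ 2 %% p | y <- xs].
have [/hasP[_ /mapP[y /xs_small y_lt ->] /mapP[x /xs_small x_lt Exy]]|s12] :=
  boolP (has (mem s1) s2).
  exists x, y; split => //; have := ltn_pmod (y ^ 2) p_gt0 => y_mod_lt.
  have -> : x ^ 2 + y ^ 2 + 1 = (x ^ 2 %/ p + y ^ 2 %/ p + 1) * p.
    by rewrite {1}(divn_eq (x ^ 2) p) {1}(divn_eq (y ^ 2) p) !mulnDl mul1n; lia.
  exact: dvdn_mull.
exfalso; have : uniq (s1 ++ s2).
  rewrite cat_uniq s12 !map_inj_in_uniq ?iota_uniq // => x y /xs_small x_lt /xs_small y_lt.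
    have := ltn_pmod (x ^ 2) p_gt0; have := ltn_pmod (y ^ 2) p_gt0.
    by move=> ? ? Exy; apply: (sqr_modn_inj p_prime) => //; lia.
  exact: (sqr_modn_inj p_prime).
have s12_small : {subset s1 ++ s2 <= iota 0 p}.
  move=> z; rewrite mem_cat mem_iota => /orP[] /mapP[x _ ->].
    by have := ltn_pmod (x ^ 2) p_gt0; lia.
  by have := ltn_pmod (x ^ 2) p_gt0; lia.
move/uniq_leq_size => /(_ _ s12_small); rewrite size_cat !size_map !size_iota; lia.
Qed.

End SumOfTwoSquaresPlusOne.

Lemma sum4sq_prime p : prime p -> sum4sq p.
Proof.
move=> p_prime; have [p2|p_odd] := even_prime p_prime.
  by exists (vec4 1 1 0 0); rewrite sqnorm_vec4 p2 expr1n expr0n !addr0.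
have [x [y [x_lt y_lt p_dvd]]] := prime_dvd_sqr_add_sqr_add1 p_prime p_odd.
have p_gt0 := prime_gt0 p_prime.
apply: (sum4sq_mul_prime p_prime (m := (x ^ 2 + y ^ 2 + 1) %/ p)).
  have n_gt0 : (0 < x ^ 2 + y ^ 2 + 1)%N by rewrite addn1.
  rewrite divn_gt0 // dvdn_leq // ltn_divLR //.
  have sqr_lt z : (2 * z < p)%N -> (4 * z ^ 2 < p ^ 2)%N.
    by move=> z_lt; rewrite -[4%N]/(2 ^ 2)%N -expnMn ltn_exp2r.
  have := sqr_lt _ x_lt; have := sqr_lt _ y_lt; have := prime_gt1 p_prime.
  by rewrite mulnn -(ltn_exp2r 1 p (isT : 0 < 2)%N); lia.
by rewrite divnK //; exists (vec4 x%:Z y%:Z 1 0); rewrite sqnorm_vec4; lia.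
Qed.

Theorem sum4sq_nat (n : nat) : sum4sq n.
Proof.
elim/ltn_ind: n => n IH; have [n_le1|n_gt1] := leqP n 1.
  by exists (vec4 n%:Z 0 0 0); rewrite sqnorm_vec4 expr0n !addr0; case: n n_le1 IH => [|[]].
have p_prime := pdiv_prime n_gt1.
rewrite -(divnK (pdiv_dvd n)) PoszM; apply: sum4sqM; last exact: sum4sq_prime.
by apply: IH; rewrite ltn_Pdiv ?prime_gt1 //; lia.
Qed.

Section IntegerPoints.
Variable R : realType.

Lemma euclid_dist_intr n (x y : 'rV[int]_n) :
  euclid_dist (map_mx intr x : 'rV[R]_n) (map_mx intr y) = Num.sqrt (sqnorm (x - y))%:~R.
Proof.
rewrite /euclid_dist rmorph_sum; congr Num.sqrt.
by apply: eq_bigr => i _; rewrite !mxE rmorphXn rmorphB.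
Qed.

Lemma Zlattice_intr n (x : 'rV[int]_n) : Zlattice (map_mx intr x : 'rV[R]_n).
Proof. by move=> i; exists (x 0 i); rewrite mxE. Qed.

Lemma contains_Kn_sqnorm n c (r : int) (v : 'I_c -> 'rV[int]_n) : 0 < r ->
  (forall i j, i != j -> sqnorm (v i - v j) = r) ->
  contains_Kn (@Zlattice R n) (Num.sqrt r%:~R) c.
Proof.
move=> r_gt0 v_sqnorm; exists (fun i => map_mx intr (v i)); split; [|split].
- move=> i j /rowP vij; apply/eqP; apply: contraT => /v_sqnorm.
  have -> : v i = v j by apply/rowP => k; apply: (@intr_inj R); have := vij k; rewrite !mxE.
  by rewrite subrr sqnorm0 => r0; move: r_gt0; rewrite -r0 ltxx.
- by move=> i; apply: Zlattice_intr.
- by move=> i j ij; rewrite /edg_adj euclid_dist_intr v_sqnorm //; do !split; apply: Zlattice_intr.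
Qed.

Lemma contains_Kn_widen n k (d : R) c :
  contains_Kn (@Zlattice R n) d c -> contains_Kn (@Zlattice R (n + k)) d c.
Proof.
move=> [f [f_inj [f_Z f_adj]]].
pose g i := row_mx (f i) (0 : 'rV[R]_k).
have g_Z i : Zlattice (g i).
  by move=> l; rewrite mxE; case: split => l'; [exact: f_Z | exists 0; rewrite mxE].
have g_dist i j : euclid_dist (g i) (g j) = euclid_dist (f i) (f j).
  rewrite /euclid_dist big_split_ord /= [X in _ + X]big1 ?addr0 => [|l _].
    by under eq_bigr do rewrite !row_mxEl.
  by rewrite !row_mxEr mxE subrr expr0n.
exists g; split; [|split].
- by move=> i j /eq_row_mx[/f_inj].
- exact: g_Z.
- by move=> i j /f_adj[_ [_ dij]]; rewrite /edg_adj g_dist.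
Qed.

End IntegerPoints.

Definition tetrahedron (i : 'I_4) : 'rV[int]_4 :=
  nth 0 [:: vec4 0 0 0 0; vec4 1 1 0 0; vec4 1 0 1 0; vec4 0 1 1 0] i.

Lemma sqnorm_tetrahedronB i j : i != j -> sqnorm (tetrahedron i - tetrahedron j) = 2.
Proof.
by case: i j => [[|[|[|[|//]]]] ?] [[|[|[|[|//]]]] ?] //= _; rewrite vec4B sqnorm_vec4.
Qed.

Lemma contains_K4_Z4 (R : realType) (q : 'rV[int]_4) : q != 0 ->
  contains_Kn (@Zlattice R 4) (Num.sqrt (2 * sqnorm q)%:~R) 4.
Proof.
move=> q_nz; apply: (@contains_Kn_sqnorm R _ _ _ (fun i => tetrahedron i *m quat_mx q)).
  by rewrite mulr_gt0 // lt_def sqnorm_ge0 andbT; apply: contra q_nz => /eqP/sqnorm_eq0 ->.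
by move=> i j ij; rewrite -mulmxBl sqnorm_mul_quat_mx sqnorm_tetrahedronB // mulrC.
Qed.

Theorem lemma3 (R : realType) (m r : nat) :
  (0 < r)%N -> ~~ odd r -> (4 <= m)%N ->
  contains_Kn (@Zlattice R m) (Num.sqrt (r%:R : R)) 4.
Proof.
move=> r_gt0 r_even m_ge4.
have r_half : r = (r./2 * 2)%N by rewrite muln2 -[LHS]odd_double_half (negbTE r_even).
have [q Eq] := sum4sq_nat r./2.
have q_nz : q != 0.
  by apply: contraTneq r_gt0 => q0; move: Eq; rewrite q0 sqnorm0 r_half; lia.
have -> : r%:R = (2 * sqnorm q)%:~R :> R by rewrite -Eq {1}r_half natrM mulrC intrM.
by rewrite -(subnKC m_ge4); apply/contains_Kn_widen/contains_K4_Z4.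
Qed.
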